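(* Let $u$ and $v$ be vertices of $G$ such that $u$ is neither an ancestor nor a descendant of $v$. Suppose the set $X$ of Case 3 of the routing algorithm (the vertices of $C_{T^u}$ that are ancestors of $v$ and not ancestors of $u$) is non-empty. Then the vertices visited when executing the routing steps of Case 3 b) lie on the path in $T$ from $lca(u,v)$ to $v$, and they are visited in the order in which they appear on this path.
   Context: Let $T$ be a rooted tree on $n$ vertices with positive edge weights; $P(a,b)$ is the path in $T$ from $a$ to $b$ and $\delta_T(a,b)$ its weight; $lca(a,b)$ is the lowest common ancestor. Ancestor/descendant refer to $T$, and a vertex counts as its own ancestor and descendant; ''deepest''/''highest'' refer to depth in $T$. $T_v$ is the subtree of $T$ rooted at $v$. For every non-leaf vertex $v$ fix a child $c_1(v)$ with $|T_{c_1(v)}|$ maximal; edges $(v,c_1(v))$ are leftmost. A subtree $R$ of $T$ is rooted at its vertex closest to the root, $rt(R)$, and inherits the leftmost labelling; $R_v$ is the subtree of $R$ rooted at $v$. $P_R(v)$ is the longest downward path from $v$ in $R$ using only leftmost edges, with last vertex $l(v)$; $l(R):=l(rt(R))$. A vertex $v$ of $R$ is $d$-balanced if $|R_{c_1(v)}|\le |R|-d$ (with $|R_{c_1(v)}|=0$ if $c_1(v)$ is undefined or not in $R$); $b_d(v)$ is the first $d$-balanced vertex on $P_R(v)$, or NULL. $CV(R,d)=\emptyset$ if $b_d(rt(R))$ is NULL, else $\{b\}\cup\bigcup_w CV(R_w,d)$ with $b=b_d(rt(R))$ and $w$ ranging over children of $b$ in $R$. Fix an integer $k\ge4$; for a subtree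 $R$ with $m$ vertices, $C_R=V(R)$ if $k\ge m/2-1$, else $C_R=CV(R,m/k)\cup\{l(R),rt(R)\}$. Canonical subtrees: $T$ is canonical; if $R$ is canonical, each component of $R$ minus $C_R$ is canonical. Each vertex $v$ lies in $C_R$ for exactly one canonical $R$, denoted $T^v$. The spanner $G$ has vertex set $V(T)$ and edges: all edges of $T$, and all pairs of distinct vertices of $C_R$ for every canonical $R$; edge $(a,b)$ has weight $\delta_T(a,b)$. Routing algorithm from current vertex $u$ to destination $v$: Case 0: if $v$ is adjacent to $u$, move to $v$. Case 1: $u$ is an ancestor of $v$; let $X$ be the vertices of $C_{T^u}$ that are ancestors of $v$, $x$ the deepest; move to $x$, then to the child of $x$ that is an ancestor of $v$. Case 2: $u$ is a descendant of $v$; let $X$ be the vertices of $C_{T^u}$ that are descendants of $v$ and ancestors of $u$, $x$ the highest; move to $x$, then to the parent of $x$. Case 3: $u$ is neither; let $X$ be the vertices of $C_{T^u}$ that are ancestors of $v$ but not of $u$, and $Y$ those that are ancestors of $u$ but not of $v$, $y$ the highest vertex of $Y$. Case 3 a): $X=\emptyset$: move to $y$, then to the parent of $y$. Case 3 b): $X\neq\emptyset$: with $x$ the deepest vertex of $X$ and $x'$ the child of $x$ that is an ancestor of $v$, move to $x$, then to $x'$. (Moving to the current vertex means staying.) *)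

From Stdlib Require Import Relations.
From mathcomp Require Import all_boot.

Set Implicit Arguments.
Unset Strict Implicit.
Unset Printing Implicit Defensive.

(* A rooted tree on the finite vertex type V, given by a root and a parent
   map; every vertex reaches the root by iterating the parent map (so there
   are no cycles).  The root is its own parent. *)
Record rtree (V : finType) := RTree {
  root : V;
  par : V -> V;
  par_root : par root = root;
  par_reach : forall x, exists n, iter n par x = root
}.

Section Tree.
Variables (V : finType) (T : rtree V).

Definition ancestor (a b : V) : bool :=
  [exists i : 'I_#|V|, iter i (par T) b == a].

Definition depth (x : V) : nat := #|[set a | ancestor a x]|.-1.

Definition child (c x : V) : Prop := par T c = x /\ c <> x.

Definition tedge (a b : V) : Prop := child a b \/ child b a.

Definition desc (x : V) : {set V} := [set y | ancestor x y].

Definition is_lca (u v a : V) : Prop :=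
  ancestor a u /\ ancestor a v /\
  forall b, ancestor b u -> ancestor b v -> ancestor b a.

(* The tree path P(a,b) for a an ancestor of b, listed from a down to b. *)
Definition tpath (a b : V) : seq V :=
  rev (traject (par T) b (depth b - depth a).+1).

(* Specification of the fixed leftmost-child choice c1 (None = undefined,
   i.e. the vertex is a leaf). *)
Definition leftmost_spec (c1 : V -> option V) : Prop :=
  forall x,
    (c1 x = None <-> forall c, ~ child c x) /\
    (forall c, c1 x = Some c ->
       child c x /\ forall w, child w x -> #|desc w| <= #|desc c|).

Section Routing.
Variables (c1 : V -> option V) (k : nat).

Definition is_rt (R : {set V}) (r : V) : Prop :=
  r \in R /\ forall y, y \in R -> ancestor r y.

Definition subR (R : {set V}) (x : V) : {set V} := R :&: desc x.

Definition lm (n : nat) (x : V) : option V := iter n (fun o => obind c1 o) (Some x).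

Definition chain_in (R : {set V}) (x : V) (n : nat) : Prop :=
  forall j, j <= n -> exists z, lm j x = Some z /\ z \in R.

Definition is_l (R : {set V}) (x y : V) : Prop :=
  exists n, chain_in R x n /\ lm n x = Some y /\
            forall c, c1 y = Some c -> c \notin R.

Definition sizec1 (R : {set V}) (y : V) : nat :=
  match c1 y with
  | Some c => if c \in R then #|subR R c| else 0
  | None => 0
  end.

(* y is d-balanced in R, for d = m/k:  |R_{c1 y}| <= |R| - m/k,
   i.e. (k > 0) k * |R_{c1 y}| + m <= k * |R|. *)
Definition balanced (m : nat) (R : {set V}) (y : V) : Prop :=
  k * sizec1 R y + m <= k * #|R|.

Definition is_b (m : nat) (R : {set V}) (x b : V) : Prop :=
  exists n, chain_in R x n /\ lm n x = Some b /\ balanced m R b /\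
    forall j z, j < n -> lm j x = Some z -> ~ balanced m R z.

Inductive inCV (m : nat) : {set V} -> V -> Prop :=
| CV_here R r b : is_rt R r -> is_b m R r b -> inCV m R b
| CV_rec R r b w x : is_rt R r -> is_b m R r b -> w \in R -> child w b ->
    inCV m (subR R w) x -> inCV m R x.

Definition inC (R : {set V}) (x : V) : Prop :=
  let m := #|R| in
  if m <= 2 * k + 2  (* k >= m/2 - 1 *)
  then is_true (x \in R)
  else inCV m R x \/ is_rt R x \/ (exists r, is_rt R r /\ is_l R r x).

Definition rest (R : {set V}) (x : V) : Prop := x \in R /\ ~ inC R x.

Definition component (R S : {set V}) : Prop :=
  exists x0, rest R x0 /\
    forall y, y \in S <->
      clos_refl_trans V (fun a b => rest R a /\ rest R b /\ tedge a b) x0 y.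

Inductive canon : {set V} -> Prop :=
| canon_T : canon setT
| canon_C R S : canon R -> component R S -> canon S.

Definition adjG (a b : V) : Prop :=
  a <> b /\ (tedge a b \/ exists R, canon R /\ inC R a /\ inC R b).

End Routing.
End Tree.

From Pilot Require Import Defs.
From Stdlib Require Import Relations.
From mathcomp Require Import all_boot.
From mathcomp Require Import zify.

Set Implicit Arguments.
Unset Strict Implicit.
Unset Printing Implicit Defensive.

(* Case 3 b) visits the deepest vertex x of X and then the child x' of x that
   is an ancestor of v.  The ancestors of v are the iterated parents
   [iter i par v], i <= depth v, and P(l, v) lists those of depth at least
   depth l by increasing depth.  Both x and x' are ancestors of v, and x is
   strictly deeper than l, for otherwise x would be an ancestor of l and hence
   of u.  The child x' exists because x <> v: otherwise u and v would both lie
   in C_{T^u} and be adjacent in G. *)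

Section RootedTree.
Variables (V : finType) (T : rtree V).
Local Notation p := (par T).
Local Notation rt := (Defs.root T).

Lemma iter_par_root n : iter n p rt = rt.
Proof. by elim: n => //= n ->; exact: par_root. Qed.

Let reach_root x : exists n, iter n p x == rt.
Proof. by case: (par_reach T x) => n E; exists n; apply/eqP. Qed.

(* [depth] counts ancestors; the iteration lemmas are proved for this minimal
   number of parent steps to the root instead, and transferred by [depth_hit]. *)
Let hit x : nat := ex_minn (reach_root x).

Let iter_hit x : iter (hit x) p x = rt.
Proof. by rewrite /hit; case: ex_minnP => n /eqP. Qed.

Let hit_min x n : iter n p x = rt -> hit x <= n.
Proof. by rewrite /hit; case: ex_minnP => m _ min_m /eqP; apply: min_m. Qed.

Let iter_past_hit x n : hit x <= n -> iter n p x = rt.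
Proof. by move=> le_hn; rewrite -(subnK le_hn) iterD iter_hit iter_par_root. Qed.

Let iter_hit_inj x i j :
  i <= hit x -> j <= hit x -> iter i p x = iter j p x -> i = j.
Proof.
wlog le_ij : i j / i <= j.
  by move=> W Hi Hj E; case: (leqP i j) => [|/ltnW] H; [|symmetry]; apply: W.
move=> Hi Hj E; apply/eqP; rewrite eqn_leq le_ij /=; apply/negP => lt_ji.
have : iter (hit x - j + i) p x = rt by rewrite iterD E -iterD subnK ?iter_hit.
by move/hit_min; lia.
Qed.

Let iter_ord_inj x : injective (fun i : 'I_(hit x).+1 => iter i p x).
Proof. by move=> i j /iter_hit_inj E; apply/val_inj/E; rewrite -ltnS. Qed.

Let ancestors_hit x :
  [set a | ancestor T a x] = [set iter (val i) p x | i : 'I_(hit x).+1].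
Proof.
have lt_hit_card : hit x < #|V|.
  by have := leq_card _ (@iter_ord_inj x); rewrite card_ord.
apply/setP => a; rewrite inE; apply/existsP/imsetP => [[[i lt_i] /= /eqP <-]|[i _ ->]].
  have lt_min : minn i (hit x) < (hit x).+1 by rewrite ltnS geq_minr.
  exists (Ordinal lt_min) => //=.
  by case: (leqP i (hit x)) => [//|/ltnW le_hi]; rewrite iter_hit iter_past_hit.
by exists (Ordinal (leq_trans (ltn_ord i) lt_hit_card)).
Qed.

Let depth_hit x : depth T x = hit x.
Proof.
by rewrite /depth ancestors_hit card_imset ?card_ord //; apply: iter_ord_inj.
Qed.

Lemma ancestorP a x :
  reflect (exists2 i, i <= depth T x & iter i p x = a) (ancestor T a x).
Proof.
have <- : (a \in [set iter (val i) p x | i : 'I_(hit x).+1]) = ancestor T a x.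
  by rewrite -ancestors_hit inE.
rewrite depth_hit; apply: (iffP imsetP) => [[i _ ->]|[i le_ih <-]].
  by exists i; rewrite // -ltnS ltn_ord.
by exists (Ordinal (le_ih : i < (hit x).+1)).
Qed.

Lemma iter_depth x : iter (depth T x) p x = rt.
Proof. by rewrite depth_hit. Qed.

Lemma iter_par_inj x i j :
  i <= depth T x -> j <= depth T x -> iter i p x = iter j p x -> i = j.
Proof. by rewrite depth_hit; apply: iter_hit_inj. Qed.

Lemma depth_iter x i : i <= depth T x -> depth T (iter i p x) = depth T x - i.
Proof.
rewrite !depth_hit => le_ih; apply/eqP; rewrite eqn_leq; apply/andP; split.
  by apply: hit_min; rewrite -iterD subnK ?iter_hit.
have : iter (hit (iter i p x) + i) p x = rt by rewrite iterD iter_hit.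
by move/hit_min; lia.
Qed.

Lemma ancestor_iter n x : ancestor T (iter n p x) x.
Proof.
apply/ancestorP; case: (leqP n (depth T x)) => [le_nd|/ltnW le_dn].
  by exists n.
by exists (depth T x); rewrite // depth_hit iter_hit iter_past_hit -?depth_hit.
Qed.

Lemma ancestor_refl x : ancestor T x x.
Proof. exact: (ancestor_iter 0). Qed.

Lemma ancestor_trans b a c : ancestor T a b -> ancestor T b c -> ancestor T a c.
Proof.
by case/ancestorP=> i _ <- /ancestorP[j _ <-]; rewrite -iterD ancestor_iter.
Qed.

Lemma ancestor_by_depth a b x :
  ancestor T a x -> ancestor T b x -> depth T a <= depth T b -> ancestor T a b.
Proof.
case/ancestorP=> i le_i <- /ancestorP[j le_j <-].
rewrite !depth_iter // => le_ab.
by rewrite -(subnK (_ : j <= i)) ?iterD ?ancestor_iter //; lia.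
Qed.

Lemma depth_ancestor a x : ancestor T a x -> depth T a <= depth T x.
Proof. by case/ancestorP=> i le_i <-; rewrite depth_iter ?leq_subr. Qed.

Lemma depth_child c x : child T c x -> depth T c = (depth T x).+1.
Proof.
case=> <- neq_pc; have d_gt0 : 0 < depth T c.
  rewrite lt0n; apply/eqP => d0; apply: neq_pc.
  by rewrite -[c]/(iter 0 p c) -d0 iter_depth par_root.
by rewrite -[p c]/(iter 1 p c) depth_iter //; lia.
Qed.

Lemma exists_child_ancestor x v :
  ancestor T x v -> x != v -> exists2 x', child T x' x & ancestor T x' v.
Proof.
case/ancestorP=> i le_i <- neq_iv.
have i_gt0 : 0 < i by case: i le_i neq_iv => // _; rewrite eqxx.
exists (iter i.-1 p v); last exact: ancestor_iter.
split; first by rewrite -iterS prednK.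
by move/(iter_par_inj (leq_trans (leq_pred i) le_i) le_i); lia.
Qed.

Lemma lt_depth_common_ancestor l x u v :
  ancestor T l u -> ancestor T l v -> ancestor T x v -> ~~ ancestor T x u ->
  depth T l < depth T x.
Proof.
move=> lu lv xv; apply: contraNT; rewrite -leqNgt => le_xl.
exact: ancestor_trans (ancestor_by_depth xv lv le_xl) lu.
Qed.

Lemma size_tpath l v : size (tpath T l v) = (depth T v - depth T l).+1.
Proof. by rewrite size_rev size_traject. Qed.

Lemma nth_tpath l v i : i <= depth T v - depth T l ->
  nth v (tpath T l v) i = iter (depth T v - depth T l - i) p v.
Proof.
move=> le_i; rewrite nth_rev ?size_traject ?ltnS // nth_traject; last by lia.
by congr iter; lia.
Qed.

Lemma uniq_tpath l v : uniq (tpath T l v).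
Proof.
rewrite rev_uniq; apply/(uniqP v) => i j; rewrite !inE size_traject => lt_i lt_j.
by rewrite !nth_traject // => /iter_par_inj; apply; lia.
Qed.

Lemma nth_tpath_depth l v a :
  ancestor T l v -> ancestor T a v -> depth T l <= depth T a ->
  nth v (tpath T l v) (depth T a - depth T l) = a.
Proof.
move=> /depth_ancestor le_lv /ancestorP[m le_m <-]; rewrite depth_iter // => le_l.
by rewrite nth_tpath; [congr iter|]; lia.
Qed.

Lemma mem_tpath l v a :
  ancestor T l v -> ancestor T a v -> depth T l <= depth T a -> a \in tpath T l v.
Proof.
move=> lv av le_la; rewrite -(nth_tpath_depth lv av le_la) mem_nth //.
by rewrite size_tpath; have := depth_ancestor av; lia.
Qed.

Lemma index_tpath l v a :
  ancestor T l v -> ancestor T a v -> depth T l <= depth T a ->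
  index a (tpath T l v) = depth T a - depth T l.
Proof.
move=> lv av le_la; rewrite -{1}(nth_tpath_depth lv av le_la) index_uniq //.
  by rewrite size_tpath; have := depth_ancestor av; lia.
exact: uniq_tpath.
Qed.

End RootedTree.

Theorem lemma11 (V : finType) (T : rtree V) (c1 : V -> option V)
  (Hc1 : leftmost_spec T c1) (k : nat) (hk : 4 <= k)
  (u v : V) (Tu : {set V}) (l : V) :
  ~~ ancestor T u v -> ~~ ancestor T v u ->
  (* Tu = T^u : the canonical subtree with u \in C_{Tu} *)
  canon T c1 k Tu -> inC T c1 k Tu u ->
  is_lca T u v l ->
  (* Case 0 does not apply *)
  ~ adjG T c1 k u v ->
  (* X is non-empty (Case 3 b)) *)
  (exists y, inC T c1 k Tu y /\ ancestor T y v /\ ~~ ancestor T y u) ->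
  forall x : V,
    (* x is the deepest vertex of X *)
    (inC T c1 k Tu x /\ ancestor T x v /\ ~~ ancestor T x u) ->
    (forall y, inC T c1 k Tu y -> ancestor T y v -> ~~ ancestor T y u ->
               depth T y <= depth T x) ->
    (exists x', child T x' x /\ ancestor T x' v) /\
    forall x', child T x' x -> ancestor T x' v ->
      x \in tpath T l v /\ x' \in tpath T l v /\
      index x (tpath T l v) < index x' (tpath T l v).
Proof.
move=> nuv _ cTu Cu [lu [lv _]] nadj _ x [Cx [xv xu]] _.
have neq_xv : x != v.
  apply/eqP => xv_eq; apply: nadj; split; last by right; exists Tu; rewrite -xv_eq.
  by move=> uv_eq; rewrite uv_eq ancestor_refl in nuv.
have lt_lx := lt_depth_common_ancestor lu lv xv xu.
split; first by have [x' ? ?] := exists_child_ancestor xv neq_xv; exists x'.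
move=> x' cx' x'v; have lt_xx' : depth T x < depth T x' by rewrite (depth_child cx').
have le_lx' := ltnW (ltn_trans lt_lx lt_xx').
split; first exact: mem_tpath lv xv (ltnW lt_lx).
split; first exact: mem_tpath lv x'v le_lx'.
by rewrite (index_tpath lv xv (ltnW lt_lx)) (index_tpath lv x'v le_lx'); lia.
Qed.
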